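(* Let $N\ge 2$ and $M>2$ be integers and consider the indirect control system described in the context, with real Lie algebra $\mathcal{L}$ generated by $iH_0$, $i(1_S\otimes\sigma_x^j)$ and $i(1_S\otimes\sigma_y^j)$, $j=1,\dots,M$. If Condition 1 and Condition 2 hold, then $i(1_S\otimes\sigma_{[\alpha]})\in\mathcal{L}$ for every $[\alpha]\in\{x,y,z,0\}^M$ with $[\alpha]\neq(0,\dots,0)$.
   Context: The controlled system is $\mathbb{C}^N$ with orthonormal basis $|1\rangle,\dots,|N\rangle$; $e_{jk}=|j\rangle\langle k|$. $H_S=\sum_{j=1}^N E_j e_{jj}$ with real $E_j$, $\sum_j E_j=0$. For $1\le j<k\le N$: $x_{jk}=e_{jk}+e_{kj}$, $y_{jk}=i(e_{jk}-e_{kj})$, $h_j=e_{jj}-e_{j+1,j+1}$; $x_j=x_{j,j+1}$, $y_j=y_{j,j+1}$; $s_j^{(1)}=x_j$, $s_j^{(2)}=y_j$. The accessor is $(\mathbb{C}^2)^{\otimes M}$; $\sigma_\alpha^j$ is the Pauli matrix $\sigma_\alpha$ ($\alpha=x,y,z$) on the $j$-th qubit, $\sigma_0=1$, and $\sigma_{[\alpha]}=\prod_{j=1}^M\sigma^j_{\alpha_j}$ for $[\alpha]\in\{x,y,z,0\}^M$. $1_S,1_A$ denote identities. $H_A=\sum_{j=1}^M\hbar\omega_j\sigma_z^j+\sum_{j=1}^{M-1}c_j\sigma_x^j\sigma_x^{j+1}$; $H_S'=\sum_{j=1}^{N-1}d_j x_j\otimes 1_A$; $H_{SA}=\sum_{j=1}^{N-1}\sum_{k=1}^2\sum_{[\alpha]\in\{x,y\}^M}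 g^{j(k)}_{[\alpha]}\, s_j^{(k)}\otimes\sigma_{[\alpha]}$; all coefficients real; $H_0=H_S\otimes 1_A+H_S'+1_S\otimes H_A+H_{SA}$. Condition 1: $c_j\neq 0$ for $j=1,\dots,M-1$. Condition 2: there exist $2(N-1)$ elements $[\beta]_1,\dots,[\beta]_{2(N-1)}$ of $\{x,y\}^M$ such that the $2(N-1)\times 2(N-1)$ matrix $G$ whose $r$-th row is $(g^{1(1)}_{[\beta]_r},\dots,g^{(N-1)(1)}_{[\beta]_r},g^{1(2)}_{[\beta]_r},\dots,g^{(N-1)(2)}_{[\beta]_r})$ has nonzero determinant. *)

From HB Require Import structures.
From mathcomp Require Import all_boot all_order all_algebra.
From mathcomp Require Import reals complex.
Set Implicit Arguments. Unset Strict Implicit. Unset Printing Implicit Defensive.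
Import Order.TTheory GRing.Theory Num.Theory.
Local Open Scope ring_scope.
Local Open Scope complex_scope.

Section Model.
Variables (R : realType) (N M : nat).
Local Notation C := R[i].

Inductive pauli := P0 | PX | PY | PZ.

(* Matrix entries of the Pauli matrices in the qubit basis
   false = |0>, true = |1> (sigma_z |0> = |0>). *)
Definition pauli_entry (a : pauli) (b b' : bool) : C :=
  match a with
  | P0 => (b == b')%:R
  | PX => (b != b')%:R
  | PY => if b == b' then 0 else if b then 'i%C else - 'i%C
  | PZ => if b == b' then (if b then -1 else 1) else 0
  end.

(* basis of the accessor (C^2)^{(x)M}: bit strings *)
Definition acc_idx := {ffun 'I_M -> bool}.
(* basis of C^N (x) (C^2)^{(x)M}: |s> (x) |b>, s : 'I_N  (|s+1> in the paper) *)
Definition idx := ('I_N * acc_idx)%type.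
Definition dim := #|{: idx}|.
Definition mx := 'M[C]_dim.

Definition pstr (alpha : 'I_M -> pauli) (b b' : acc_idx) : C :=
  \prod_(j < M) pauli_entry (alpha j) (b j) (b' j).

(* sigma_a on qubit number j (0-based) *)
Definition single (j : nat) (a : pauli) : 'I_M -> pauli :=
  fun l => if val l == j then a else P0.

Definition tens (A : 'I_N -> 'I_N -> C) (B : acc_idx -> acc_idx -> C) : mx :=
  \matrix_(p, q) (A (enum_val p).1 (enum_val q).1 * B (enum_val p).2 (enum_val q).2).

Definition idS (s s' : 'I_N) : C := (s == s')%:R.
Definition idA (b b' : acc_idx) : C := (b == b')%:R.

(* e_{jk} = |j><k| (0-based nat labels) *)
Definition eS (j k : nat) (s s' : 'I_N) : C := ((val s == j) && (val s' == k))%:R.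
Definition xS (j k : nat) s s' : C := eS j k s s' + eS k j s s'.
Definition yS (j k : nat) s s' : C := 'i%C * (eS j k s s' - eS k j s s').
(* s_j^{(1)} = x_j, s_j^{(2)} = y_j ; k = 0 <-> (1), k = 1 <-> (2) *)
Definition sS (j : nat) (k : 'I_2) : 'I_N -> 'I_N -> C :=
  if val k == 0%N then xS j j.+1 else yS j j.+1.

(* element of {x,y}^M encoded by a bit string: false = x, true = y *)
Definition xy (beta : acc_idx) : 'I_M -> pauli := fun l => if beta l then PY else PX.

Definition H_S (E : 'I_N -> R) : mx :=
  tens (fun s s' => (s == s')%:R * (E s)%:C) idA.
Definition H_A (hbar : R) (omega : 'I_M -> R) (c : 'I_M.-1 -> R) : mx :=
  \sum_(j < M) ((hbar * omega j)%:C *: tens idS (pstr (single j PZ)))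
  + \sum_(j < M.-1) ((c j)%:C *:
       (tens idS (pstr (single j PX)) *m tens idS (pstr (single j.+1 PX)))).
Definition H_S' (d : 'I_N.-1 -> R) : mx :=
  \sum_(j < N.-1) ((d j)%:C *: tens (xS j j.+1) idA).
Definition H_SA (g : 'I_N.-1 -> 'I_2 -> acc_idx -> R) : mx :=
  \sum_(j < N.-1) \sum_(k < 2) \sum_(beta : acc_idx)
     ((g j k beta)%:C *: tens (sS j k) (pstr (xy beta))).
Definition H_0 E hbar omega c d g : mx :=
  H_S E + H_S' d + H_A hbar omega c + H_SA g.

(* Condition 2 matrix G: row r = (g^{1(1)}_{beta_r},...,g^{(N-1)(1)}_{beta_r},
   g^{1(2)}_{beta_r},...,g^{(N-1)(2)}_{beta_r}) *)
Definition Gmx (g : 'I_N.-1 -> 'I_2 -> acc_idx -> R)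
    (beta : 'I_(N.-1 + N.-1) -> acc_idx) : 'M[R]_(N.-1 + N.-1) :=
  \matrix_(r, col) match split col with
                   | inl j => g j 0 (beta r)
                   | inr j => g j 1 (beta r)
                   end.

End Model.

Inductive lie_gen (K : numFieldType) (n : nat) (S : 'M[K]_n -> Prop) : 'M[K]_n -> Prop :=
| lie_base A : S A -> lie_gen S A
| lie_add A B : lie_gen S A -> lie_gen S B -> lie_gen S (A + B)
| lie_scale (r : K) A : r \is Num.real -> lie_gen S A -> lie_gen S (r *: A)
| lie_bracket A B : lie_gen S A -> lie_gen S B -> lie_gen S (A *m B - B *m A).

(** Write sigma_a for 1_S (x) sigma_[a].  Two such operators either
commute or anticommute, according to the parity of the number of qubits on which
their letters anticommute; in the odd case [i sigma_a, i sigma_b] is a nonzero real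
multiple of i sigma_(ab).  Hence the i sigma_a lying in the Lie algebra are closed
under this "odd product", and the generators supply all single-qubit X_j, Y_j and
then Z_j.  The double commutator with i Z_k multiplies every matrix entry by -4 or 0
according to whether it flips qubit k, so it projects onto the part of an operator
that is off-diagonal in qubit k.  Projecting i H_0 onto the part flipping qubits k
and k+1 but not a third qubit l leaves exactly i c_k X_k X_(k+1): the coupling H_SA
flips every qubit, which is where M > 2 is used, and Condition 1 lets us divide by
c_k.  Finally single-qubit letters and nearest-neighbour XX generate every
nonidentity Pauli string under the odd product, by induction on the last qubit of
its support. *)

From Pilot Require Import Defs.
From HB Require Import structures.
From mathcomp Require Import all_boot all_order all_algebra.
From mathcomp Require Import reals complex zify ring.
Import Order.TTheory GRing.Theory Num.Theory.
Set Implicit Arguments. Unset Strict Implicit. Unset Printing Implicit Defensive.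
Local Open Scope ring_scope.
Local Open Scope complex_scope.

Definition lie_br (K : pzRingType) (n : nat) (A B : 'M[K]_n) : 'M[K]_n :=
  A *m B - B *m A.

Section LieGenerated.
Variables (K : numFieldType) (n : nat) (S : 'M[K]_n -> Prop).
Implicit Types A B : 'M[K]_n.

Lemma lie_gen_sub A B : lie_gen S A -> lie_gen S B -> lie_gen S (A - B).
Proof.
by move=> SA SB; apply: lie_add SA _; rewrite -scaleN1r; apply: lie_scale SB; rewrite realN.
Qed.

Lemma lie_gen_scale_inv (r : K) A :
  r \is Num.real -> r != 0 -> lie_gen S (r *: A) -> lie_gen S A.
Proof.
move=> r_real r0 /(lie_scale (r := r^-1)); rewrite realV => /(_ r_real).
by rewrite scalerA mulVf // scale1r.
Qed.
End LieGenerated.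

Definition pauli_code (a : pauli) : nat :=
  match a with P0 => 0 | PX => 1 | PY => 2 | PZ => 3 end.
Definition pauli_of_code (n : nat) : pauli :=
  match n with 1 => PX | 2 => PY | 3 => PZ | _ => P0 end.
Lemma pauli_codeK : cancel pauli_code pauli_of_code. Proof. by case. Qed.
HB.instance Definition _ := Equality.copy pauli (can_type pauli_codeK).

Definition pauli_mul (a b : pauli) : pauli :=
  match a, b with
  | P0, c | c, P0 => c
  | PX, PX | PY, PY | PZ, PZ => P0
  | PX, PY | PY, PX => PZ
  | PY, PZ | PZ, PY => PX
  | PZ, PX | PX, PZ => PY
  end.

Definition pauli_anti (a b : pauli) : bool := [&& a != P0, b != P0 & a != b].

Definition pauli_neg (a b : pauli) : bool :=
  match a, b with PY, PX | PZ, PY | PX, PZ => true | _, _ => false end.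

Lemma pauli_mul0r v : pauli_mul v P0 = v. Proof. by case: v. Qed.
Lemma pauli_anti0r v : pauli_anti v P0 = false. Proof. by case: v. Qed.

Section PauliAlgebra.
Variable R : realType.
Local Notation C := R[i].

(* sigma_a sigma_b = pauli_phase a b * sigma_(pauli_mul a b) *)
Definition pauli_phase (a b : pauli) : C :=
  'i ^+ pauli_anti a b * (-1) ^+ pauli_neg a b.

Lemma pauli_entry_mul a b x y :
  \sum_(c : bool) pauli_entry R a x c * pauli_entry R b c y
  = pauli_phase a b * pauli_entry R (pauli_mul a b) x y.
Proof.
rewrite big_bool /pauli_phase.
case: a; case: b; case: x; case: y;
  rewrite /= ?expr0 ?expr1 ?mulr1 ?mul1r ?mulr0 ?mul0r ?addr0 ?add0r //.
all: by rewrite ?mulN1r ?mulrN1 ?mulNr ?mulrN -?expr2 ?sqr_i ?opprK.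
Qed.

Lemma pauli_phaseC a b : pauli_phase b a = (-1) ^+ pauli_anti a b * pauli_phase a b.
Proof.
by case: a; case: b; rewrite /pauli_phase /= ?expr0 ?expr1 ?mulr1 ?mul1r ?mulrN1 ?mulN1r ?opprK.
Qed.

Variables N M : nat.
Local Notation pstring := ('I_M -> pauli).

Definition pmul (a b : pstring) : pstring := fun j => pauli_mul (a j) (b j).
Definition anti_count (a b : pstring) : nat := \sum_j pauli_anti (a j) (b j).

Lemma pstr_mul (a b : pstring) x y :
  \sum_z pstr R a x z * pstr R b z y
  = (\prod_j pauli_phase (a j) (b j)) * pstr R (pmul a b) x y.
Proof.
rewrite /pstr -big_split /=; under [RHS]eq_bigr do rewrite -pauli_entry_mul.
rewrite bigA_distr_bigA /=; by apply: eq_bigr => z _; rewrite big_split.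
Qed.

Lemma prod_pauli_phase (a b : pstring) :
  \prod_j pauli_phase (a j) (b j)
  = 'i ^+ anti_count a b * (-1) ^+ (\sum_j pauli_neg (a j) (b j)).
Proof. by rewrite big_split /= !prodrXr. Qed.

Lemma prod_pauli_phaseC (a b : pstring) :
  \prod_j pauli_phase (b j) (a j)
  = (-1) ^+ anti_count a b * \prod_j pauli_phase (a j) (b j).
Proof.
by under eq_bigr do rewrite pauli_phaseC; rewrite big_split /= prodrXr.
Qed.

Lemma tens_mul (A A' : 'I_N -> 'I_N -> C) (B B' : acc_idx M -> acc_idx M -> C) :
  tens A B *m tens A' B' =
  tens (fun s s'' => \sum_s' A s s' * A' s' s'') (fun x y => \sum_z B x z * B' z y).
Proof.
apply/matrixP => p r; rewrite !mxE.
under eq_bigr => q _ do rewrite !mxE.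
rewrite -(big_enum_val (A := predT)
   (fun q : idx N M => A (enum_val p).1 q.1 * B (enum_val p).2 q.2 *
                      (A' q.1 (enum_val r).1 * B' q.2 (enum_val r).2))) /=.
rewrite -(pair_big predT predT (fun s z =>
   A (enum_val p).1 s * B (enum_val p).2 z * (A' s (enum_val r).1 * B' z (enum_val r).2))) /=.
rewrite mulr_suml; apply: eq_bigr => s _.
by rewrite mulr_sumr; apply: eq_bigr => z _; rewrite mulrACA.
Qed.

Lemma idS_mul (s s'' : 'I_N) : \sum_s' @idS R N s s' * idS R s' s'' = idS R s s''.
Proof.
rewrite (bigD1 s) //= big1 ?addr0 => [|s' /negbTE ne]; first by rewrite /idS eqxx mul1r.
by rewrite /idS eq_sym ne mul0r.
Qed.

Definition sigma (a : pstring) : mx R N M := tens (@idS R N) (pstr R a).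
Definition isigma (a : pstring) : mx R N M := 'i *: sigma a.

Lemma eq_sigma (a b : pstring) : a =1 b -> sigma a = sigma b.
Proof.
by move=> ab; apply/matrixP => p q; rewrite !mxE /pstr; under eq_bigr do rewrite ab.
Qed.

Lemma sigma_mul (a b : pstring) :
  sigma a *m sigma b = (\prod_j pauli_phase (a j) (b j)) *: sigma (pmul a b).
Proof.
rewrite tens_mul; apply/matrixP => p q; rewrite !mxE idS_mul pstr_mul.
by rewrite mulrCA.
Qed.

Lemma pmulC (a b : pstring) : pmul a b =1 pmul b a.
Proof. by move=> j; rewrite /pmul; case: (a j); case: (b j). Qed.

Lemma lie_br_isigma (a b : pstring) : odd (anti_count a b) ->
  exists2 r : R, r != 0 & lie_br (isigma a) (isigma b) = r%:C *: isigma (pmul a b).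
Proof.
move=> oddK; set K := anti_count a b in oddK *.
set s := (\sum_j pauli_neg (a j) (b j))%N.
(* The commutator is (1 - (-1)^K) i^2 i^K (-1)^s sigma_ab, and i^K = i (-1)^(K/2). *)
exists (-2 * (-1) ^+ (K./2 + s)); first by rewrite mulf_neq0 ?signr_eq0 ?oppr_eq0 ?pnatr_eq0.
have iK : 'i ^+ K = 'i * (-1) ^+ K./2 :> C.
  by rewrite -{1}(odd_double_half K) oddK exprD expr1 -muln2 mulnC exprM sqr_i.
rewrite /lie_br /isigma -!scalemxAl -!scalemxAr !scalerA !sigma_mul (eq_sigma (pmulC b a)).
rewrite (prod_pauli_phaseC a b) prod_pauli_phase -/K -(signr_odd _ K) oddK iK.
rewrite !scalerA -scalerBl.
congr (_ *: _); rewrite rmorphM rmorphXn /= rmorphN1 exprD -/s -expr2 sqr_i expr1.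
by rewrite rmorphN rmorph_nat; ring.
Qed.
End PauliAlgebra.
Arguments sigma {R N M}.
Arguments isigma {R N M}.
Arguments eq_sigma {R N M a b}.

Lemma lie_gen_isigma_pmul (R : realType) (N M : nat) (S : mx R N M -> Prop)
    (a b : 'I_M -> pauli) :
  lie_gen S (isigma a) -> lie_gen S (isigma b) -> odd (anti_count a b) ->
  lie_gen S (isigma (pmul a b)).
Proof.
move=> Sa Sb /(@lie_br_isigma R N) [r r0 e].
apply: (@lie_gen_scale_inv _ _ _ r%:C); first by rewrite complex_real.
  by rewrite fmorph_eq0.
by rewrite -e; apply: lie_bracket.
Qed.

Definition set_site (M : nat) (a : 'I_M -> pauli) (j : 'I_M) (v : pauli) : 'I_M -> pauli :=
  fun l => if l == j then v else a l.

Definition xx_pair (M k : nat) : 'I_M -> pauli := pmul (single k PX) (single k.+1 PX).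

Definition supp_below (M n : nat) (a : 'I_M -> pauli) : Prop :=
  forall j : 'I_M, (n <= j)%N -> a j = P0.

Section PauliStrings.
Variable M : nat.
Implicit Types (a b : 'I_M -> pauli) (j k l : 'I_M) (w : pauli).

Lemma single_ordE j w l : single j w l = if l == j then w else P0.
Proof. by []. Qed.

Lemma single_natE (j : nat) w l : single j w l = if l == j :> nat then w else P0.
Proof. by []. Qed.

Lemma anti_count_supp1 a b j :
  (forall l, l != j -> b l = P0) -> anti_count a b = pauli_anti (a j) (b j).
Proof.
move=> b_j; rewrite /anti_count (bigD1 j) //= big1 ?addn0 // => l /b_j ->.
by rewrite pauli_anti0r.
Qed.

Lemma anti_count_supp2 a b j k : j != k ->
  (forall l, l != j -> l != k -> b l = P0) ->
  anti_count a b = (pauli_anti (a j) (b j) + pauli_anti (a k) (b k))%N.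
Proof.
move=> jk b_jk; rewrite /anti_count (bigD1 j) // (bigD1 k) 1?eq_sym //= big1 ?addn0 //.
by move=> l /andP[lj lk]; rewrite b_jk ?pauli_anti0r.
Qed.

Lemma pmul_single_XY j : @pmul M (single j PX) (single j PY) =1 single j PZ.
Proof. by move=> l; rewrite /pmul !single_ordE; case: (l == j). Qed.
End PauliStrings.

Lemma lie_gen_isigma_single_Z (R : realType) (N M : nat) (S : mx R N M -> Prop) (j : 'I_M) :
  lie_gen S (isigma (single j PX)) -> lie_gen S (isigma (single j PY)) ->
  lie_gen S (isigma (single j PZ)).
Proof.
move=> SX SY; have := lie_gen_isigma_pmul SX SY.
rewrite (@anti_count_supp1 _ _ _ j) ?single_ordE ?eqxx => [/(_ isT)|l /negbTE lj]; last first.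
  by rewrite single_ordE lj.
by rewrite /isigma (eq_sigma (pmul_single_XY j)).
Qed.

Section PauliStringGeneration.
Variables (M : nat) (L : ('I_M -> pauli) -> Prop).
Implicit Types (a b : 'I_M -> pauli) (j l : 'I_M) (v w : pauli).

Hypothesis L_ext : forall a b, a =1 b -> L a -> L b.
Hypothesis L_pmul : forall a b, L a -> L b -> odd (anti_count a b) -> L (pmul a b).
Hypothesis L_single : forall j w, w != P0 -> L (single j w).
Hypothesis L_xx_pair : forall k : nat, (k.+1 < M)%N -> L (xx_pair k).

Lemma L_set_site a j v : L a -> a j != P0 -> v != P0 -> L (set_site a j v).
Proof.
move=> La aj0 v0; have [->|v_aj] := eqVneq v (a j).
  by apply: L_ext La => l; rewrite /set_site; case: eqP => [->|].
have [w [w0 anti_w ww]] : exists w, [/\ w != P0, pauli_anti (a j) w & pauli_mul (a j) w = v].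
  by exists (pauli_mul (a j) v); move: aj0 v0 v_aj; case: (a j); case: v.
apply: L_ext (L_pmul La (L_single j w0) _) => [l|]; last first.
  rewrite (@anti_count_supp1 _ _ _ j) ?single_ordE ?eqxx ?anti_w // => l /negbTE lj.
  by rewrite single_ordE lj.
by rewrite /pmul /set_site single_ordE; case: eqP => [->|]; rewrite ?ww ?pauli_mul0r.
Qed.

Section Extension.
Variables i i1 : 'I_M.
Hypothesis i1_succ : i1 = i.+1 :> nat.
Hypothesis IH : forall a, supp_below i1 a -> (exists j, a j != P0) -> L a.

Lemma i_neq_i1 : i != i1.
Proof. by apply/eqP => e; move: i1_succ; rewrite e; lia. Qed.

Let i_i1F : (i == i1) = false := negbTE i_neq_i1.
Let i1_iF : (i1 == i) = false := etrans (eq_sym i1 i) i_i1F.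

Lemma xx_pairE l : xx_pair i l = if l == i then PX else if l == i1 then PX else P0.
Proof.
rewrite /xx_pair /pmul single_ordE /single -i1_succ val_eqE.
by case: (eqVneq l i) => [->|//]; rewrite (negbTE i_neq_i1).
Qed.

(* Multiply by X_i X_i1 a string carrying Z at i: the product carries Y at i and X at
   i1, and its other letters are those of a. *)
Lemma L_extend_core a : supp_below i1.+1 a -> L (set_site (set_site a i1 PX) i PY).
Proof.
move=> a_below.
set b := set_site (set_site a i1 P0) i PZ.
have Lb : L b.
  apply: IH => [l i1_l|]; last by exists i; rewrite /b /set_site eqxx.
  rewrite /b /set_site; have [->|l_i1] := eqVneq l i1; first by rewrite eq_sym (negbTE i_neq_i1).
  have -> : (l == i) = false by apply/eqP => e; move: i1_l; rewrite e i1_succ ltnn.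
  rewrite a_below // ltn_neqAle i1_l andbT.
  by apply: contraNneq l_i1 => /ord_inj ->.
have Lxx : L (xx_pair i) by apply: L_xx_pair; rewrite -i1_succ ltn_ord.
apply: L_ext (L_pmul Lb Lxx _) => [l|]; last first.
  rewrite (anti_count_supp2 _ i_neq_i1) => [|l lj lk]; last by rewrite xx_pairE (negbTE lj) (negbTE lk).
  by rewrite /b /set_site xx_pairE !eqxx eq_sym (negbTE i_neq_i1).
rewrite /pmul xx_pairE /b /set_site.
case: (eqVneq l i) => [//|_]; case: (eqVneq l i1) => [//|_].
exact: pauli_mul0r.
Qed.

Lemma L_extend_nonzero a : supp_below i1.+1 a -> a i != P0 -> a i1 != P0 -> L a.
Proof.
move=> a_below ai ai1.
have := L_set_site (L_extend_core a_below) (j := i) _ ai.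
rewrite {1}/set_site eqxx => /(_ isT) /(L_set_site (j := i1) (v := a i1)).
rewrite /set_site eqxx i1_iF => /(_ isT ai1).
apply: L_ext => l; case: ifP => [/eqP -> //|li1].
by case: ifP => [/eqP -> //|li]; rewrite li li1.
Qed.

Lemma L_extend a : supp_below i1.+1 a -> a i1 != P0 -> L a.
Proof.
move=> a_below ai1; have [ai_0|ai] := eqVneq (a i) P0; last first.
  exact: L_extend_nonzero.
(* Y_i Z_i1 erases the Y at i and keeps qubit i1 nontrivial. *)
set yz := set_site (single i PY) i1 PZ.
have Lyz : L yz.
  apply: L_extend_nonzero; rewrite /yz /set_site ?eqxx ?i_i1F ?single_ordE ?eqxx //.
  move=> l i1_l; have -> : (l == i1) = false by apply/eqP => e; move: i1_l; rewrite e ltnn.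
  by rewrite single_ordE; case: eqP => // e; move: i1_l; rewrite e i1_succ ltnNge leqW.
have := L_pmul (L_extend_core a_below) Lyz.
rewrite (@anti_count_supp2 _ _ yz _ _ i_neq_i1); last first.
  by move=> l li li1; rewrite /yz /set_site single_ordE (negbTE li) (negbTE li1).
rewrite /yz /set_site single_ordE !eqxx i_i1F i1_iF /= => /(_ isT).
move=> /(L_set_site (j := i1) (v := a i1)); rewrite /pmul eqxx i1_iF => /(_ isT ai1).
apply: L_ext => l; rewrite /set_site; case: ifP => [/eqP -> //|li1].
case: ifP => [/eqP ->|li]; first by rewrite i_i1F single_ordE eqxx ai_0.
by rewrite li1 single_ordE li pauli_mul0r.
Qed.
End Extension.

Lemma L_supp_below n : (n <= M)%N ->
  forall a, supp_below n a -> (exists j, a j != P0) -> L a.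
Proof.
elim: n => [_ a a0 [j]|n IHn nM a a_below [j aj]]; first by rewrite a0.
have {}IHn := IHn (ltnW nM).
pose i1 : 'I_M := Ordinal nM.
have [ai1_0|ai1] := eqVneq (a i1) P0.
  apply: IHn => [l n_l|]; last by exists j.
  have [->|l_i1] := eqVneq l i1; first exact: ai1_0.
  apply: a_below; rewrite ltn_neqAle n_l andbT eq_sym.
  by apply: contraNneq l_i1 => e; apply/eqP/ord_inj.
case: n => [|m] in IHn nM i1 ai1 a_below *.
  apply: L_ext (L_single i1 ai1) => l; rewrite single_ordE.
  case: eqP => [-> //|l_i1]; rewrite a_below // lt0n.
  by apply/eqP => e; apply: l_i1; apply: ord_inj.
apply: (L_extend (i := Ordinal (ltnW nM)) (i1 := i1)) => //.
Qed.

Lemma L_nonidentity a : (exists j, a j != P0) -> L a.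
Proof. by apply: (L_supp_below (leqnn M)) => j; rewrite leqNgt ltn_ord. Qed.
End PauliStringGeneration.

Definition pauli_offdiag (a : pauli) : bool := (a == PX) || (a == PY).

Section FlipMask.
Variables (R : realType) (N M : nat).
Local Notation C := R[i].
Local Notation sqmx := 'M[C]_(Defs.dim N M).

Lemma pauli_entry_offdiag a x y : pauli_offdiag a = (x == y) -> pauli_entry R a x y = 0.
Proof. by case: a; case: x; case: y. Qed.

Lemma pstr_offdiag (a : 'I_M -> pauli) (x y : acc_idx M) j :
  pauli_offdiag (a j) = (x j == y j) -> pstr R a x y = 0.
Proof. by move=> aj; rewrite /pstr (bigD1 j) //= pauli_entry_offdiag // mul0r. Qed.

Lemma acc_neq_site (x y : acc_idx M) : x != y -> exists j, x j != y j.
Proof.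
move=> xy; apply/existsP; rewrite -negb_forall; apply: contra xy => /forallP xy.
by apply/eqP/ffunP => j; apply/eqP.
Qed.

Lemma pstr_id (x y : acc_idx M) : pstr R (fun=> P0) x y = (x == y)%:R.
Proof.
have [<-|xy] := eqVneq x y; first by rewrite /pstr big1 // => j _ /=; rewrite eqxx.
by have [j xjy] := acc_neq_site xy; rewrite (@pstr_offdiag _ _ _ j) // (negbTE xjy).
Qed.

Definition acc_bit (k : 'I_M) (p : 'I_(Defs.dim N M)) : bool := (enum_val p).2 k.

Definition flip_mask (k : 'I_M) (X : sqmx) : sqmx :=
  \matrix_(p, q) ((acc_bit k p != acc_bit k q)%:R * X p q).

Fact flip_mask_is_semilinear k : semilinear (flip_mask k).
Proof. by split=> [c X|X Y]; apply/matrixP => p q; rewrite !mxE (mulrCA, mulrDr). Qed.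
HB.instance Definition _ k :=
  GRing.isSemilinear.Build C sqmx sqmx _ (flip_mask k) (flip_mask_is_semilinear k).

Lemma flip_mask_tens k (A : 'I_N -> 'I_N -> C) (a : 'I_M -> pauli) :
  flip_mask k (tens A (pstr R a)) = (pauli_offdiag (a k))%:R *: tens A (pstr R a).
Proof.
apply/matrixP => p q; rewrite !mxE /acc_bit.
set x := (enum_val p).2; set y := (enum_val q).2.
have [/eqP/pstr_offdiag ->|] := boolP (pauli_offdiag (a k) == (x k == y k)).
  by rewrite !mulr0.
by case: (pauli_offdiag _); case: (x k == y k).
Qed.

Definition zsign (k : 'I_M) (p : 'I_(Defs.dim N M)) : C := if acc_bit k p then -1 else 1.

Lemma pstr_single_Z (k : 'I_M) (x y : acc_idx M) :
  pstr R (single k PZ) x y = (x == y)%:R * (if x k then -1 else 1).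
Proof.
have [<-|xy] := eqVneq x y.
  rewrite mul1r /pstr (bigD1 k) //= big1 ?mulr1 => [|j jk].
    by rewrite single_ordE eqxx; case: (x k).
  by rewrite single_ordE (negbTE jk) /= eqxx.
have [j xjy] := acc_neq_site xy.
by rewrite mul0r (@pstr_offdiag _ _ _ j) // single_ordE (negbTE xjy); case: (j == k).
Qed.

Lemma sigma_single_Z (k : 'I_M) : sigma (single k PZ) = diag_mx (\row_p zsign k p) :> sqmx.
Proof.
apply/matrixP => p q; rewrite !mxE pstr_single_Z /idS /zsign /acc_bit.
rewrite -(inj_eq enum_val_inj); case: (enum_val p) (enum_val q) => s x [s' y] /=.
by rewrite xpair_eqE; case: (s == s'); case: (x == y); rewrite /= ?mulr0 ?mul0r ?mul1r ?mulr1.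
Qed.

Lemma lie_br_isigma_Z (k : 'I_M) (X : sqmx) :
  lie_br (isigma (single k PZ)) X = \matrix_(p, q) ('i * (zsign k p - zsign k q) * X p q).
Proof.
rewrite /lie_br /isigma -scalemxAl -scalemxAr -scalerBr sigma_single_Z.
by rewrite mul_diag_mx mul_mx_diag; apply/matrixP => p q; rewrite !mxE; ring.
Qed.

Lemma lie_br_isigma_Z2 (k : 'I_M) (X : sqmx) :
  lie_br (isigma (single k PZ)) (lie_br (isigma (single k PZ)) X) = (-4) *: flip_mask k X.
Proof.
rewrite !lie_br_isigma_Z; apply/matrixP => p q; rewrite !mxE /zsign.
have -> : 'i * (zsign k p - zsign k q) * ('i * (zsign k p - zsign k q) * X p q)
   = ('i ^+ 2) * (zsign k p - zsign k q) ^+ 2 * X p q by ring.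
rewrite sqr_i /zsign; case: (acc_bit k p); case: (acc_bit k q) => /=; ring.
Qed.

Lemma lie_gen_flip_mask (S : sqmx -> Prop) (k : 'I_M) X :
  lie_gen S (isigma (single k PZ)) -> lie_gen S X -> lie_gen S (flip_mask k X).
Proof.
move=> SZ SX; apply: (@lie_gen_scale_inv _ _ _ (-4)).
- by rewrite realN realn.
- by rewrite oppr_eq0 pnatr_eq0.
by rewrite -lie_br_isigma_Z2; do 2!apply: lie_bracket => //.
Qed.
End FlipMask.

Section ExtractXX.
Variables (R : realType) (N M : nat).
Local Notation C := R[i].
Local Notation sqmx := 'M[C]_(Defs.dim N M).

Definition xx_filter (k k' l : 'I_M) (X : sqmx) : sqmx :=
  flip_mask k (flip_mask k' (X - flip_mask l X)).

Fact xx_filter_is_semilinear k k' l : semilinear (xx_filter k k' l).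
Proof.
split=> [c X|X Y]; rewrite /xx_filter.
  by rewrite [flip_mask l _]linearZ /= -scalerBr !linearZ.
by rewrite [flip_mask l _]linearD /= opprD addrACA !linearD.
Qed.
HB.instance Definition _ k k' l :=
  GRing.isSemilinear.Build C sqmx sqmx _ (xx_filter k k' l) (xx_filter_is_semilinear k k' l).

Lemma xx_filter_tens k k' l (A : 'I_N -> 'I_N -> C) (a : 'I_M -> pauli) :
  xx_filter k k' l (tens A (pstr R a)) =
  [&& pauli_offdiag (a k), pauli_offdiag (a k') & ~~ pauli_offdiag (a l)]%:R *: tens A (pstr R a).
Proof.
rewrite /xx_filter flip_mask_tens -{1}[tens A _]scale1r -scalerBl !linearZ /=.
rewrite flip_mask_tens linearZ /= flip_mask_tens !scalerA; congr (_ *: _).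
by case: (pauli_offdiag (a k)); case: (pauli_offdiag (a k')); case: (pauli_offdiag (a l));
  rewrite /= ?mulr0 ?mul0r ?subrr ?subr0 ?mulr1.
Qed.

Lemma xx_filter_idA k k' l (A : 'I_N -> 'I_N -> C) : xx_filter k k' l (tens A (@idA R M)) = 0.
Proof.
have -> : tens A (@idA R M) = tens A (pstr R (fun=> P0)).
  by apply/matrixP => p q; rewrite !mxE pstr_id.
by rewrite xx_filter_tens scale0r.
Qed.

Lemma lie_gen_xx_filter (S : sqmx -> Prop) k k' l X :
  (forall j : 'I_M, lie_gen S (isigma (single j PZ))) ->
  lie_gen S X -> lie_gen S (xx_filter k k' l X).
Proof.
move=> SZ SX; do 2!apply: lie_gen_flip_mask => //.
by apply: lie_gen_sub => //; apply: lie_gen_flip_mask.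
Qed.

Lemma sigma_xx_pair (j : nat) :
  sigma (single j PX) *m sigma (single j.+1 PX) = sigma (xx_pair j) :> sqmx.
Proof.
rewrite sigma_mul big1 ?scale1r // => i _; rewrite /single.
by case: (_ == j); case: (_ == j.+1); rewrite /pauli_phase /= expr0 mulr1.
Qed.

Lemma pauli_offdiag_xx_pair (j : nat) (i : 'I_M) :
  pauli_offdiag (xx_pair j i) = (i == j :> nat) || (i == j.+1 :> nat).
Proof.
rewrite /xx_pair /pmul !single_natE; have [->|_] := eqVneq (i : nat) j.
  by rewrite (ltn_eqF (ltnSn j)).
by case: (i == j.+1 :> nat).
Qed.

(* H_S and H_S' act trivially on the accessor, the Z_j terms of H_A are diagonal at
   kk, and every term of H_SA is off-diagonal at l. *)
Lemma xx_filter_H0 E hbar omega (c : 'I_M.-1 -> R) d g (k : 'I_M.-1) (kk k1 l : 'I_M) :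
  kk = k :> nat -> k1 = k.+1 :> nat -> l != k :> nat -> l != k.+1 :> nat ->
  xx_filter kk k1 l (H_0 E hbar omega c d g) = (c k)%:C *: sigma (xx_pair k).
Proof.
move=> kk_k k1_k l_k l_k1.
rewrite /H_0 /H_S /H_S' /H_A /H_SA !linearD !linear_sum /= xx_filter_idA add0r.
rewrite [X in X + _ + _]big1 => [|j _]; last by rewrite linearZ /= xx_filter_idA scaler0.
rewrite [X in _ + (X + _) + _]big1 => [|j _]; last first.
  rewrite linearZ /= xx_filter_tens single_ordE.
  have -> : pauli_offdiag (if kk == j then PZ else P0) = false by case: (_ == _).
  by rewrite scale0r scaler0.
rewrite [X in _ + X]big1 => [|j _]; last first.
  rewrite linear_sum big1 // => i _; rewrite linear_sum big1 // => beta _.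
  rewrite linearZ /= xx_filter_tens.
  have -> : pauli_offdiag (xy beta l) = true by rewrite /xy; case: (beta l).
  by rewrite !andbF scale0r scaler0.
rewrite (bigD1 k) //= big1 => [|j jk]; rewrite linearZ /= sigma_xx_pair xx_filter_tens;
  rewrite !pauli_offdiag_xx_pair kk_k k1_k; set b := [&& _, _ & _].
  have -> : b = true by apply/idP; rewrite /b; lia.
  by rewrite scale1r !add0r !addr0.
have -> : b = false by apply/negbTE; move: jk; rewrite /b -val_eqE /=; lia.
by rewrite scale0r scaler0.
Qed.

Lemma lie_gen_isigma_xx_pair (S : mx R N M -> Prop) E hbar omega c d g (k : 'I_M.-1) :
  (2 < M)%N -> c k != 0 -> lie_gen S ('i *: H_0 E hbar omega c d g) ->
  (forall j : 'I_M, lie_gen S (isigma (single j PZ))) -> lie_gen S (isigma (xx_pair k)).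
Proof.
move=> M_gt2 ck0 SH SZ.
have k1_lt : (k.+1 < M)%N by have := ltn_ord k; lia.
have [l l_k l_k1] : exists2 l : 'I_M, l != k :> nat & l != k.+1 :> nat.
  have [k0|k_gt0] := posnP k; first by exists (Ordinal M_gt2); rewrite k0.
  by exists (Ordinal (ltn_trans (ltn0Sn 1) M_gt2)) => /=; lia.
have := lie_gen_xx_filter (Ordinal (ltnW k1_lt)) (Ordinal k1_lt) l SZ SH.
rewrite linearZ /= (@xx_filter_H0 _ _ _ _ _ _ k) // scalerA mulrC -scalerA.
by apply: lie_gen_scale_inv; rewrite ?complex_real ?fmorph_eq0.
Qed.
End ExtractXX.

Unset Implicit Arguments.
Theorem lemma4 (R : realType) (N M : nat) (hN : (2 <= N)%N) (hM : (2 < M)%N)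
  (E : 'I_N -> R) (hE : \sum_(j < N) E j = 0)
  (hbar : R) (hhbar : 0 < hbar) (omega : 'I_M -> R) (c : 'I_M.-1 -> R)
  (d : 'I_N.-1 -> R) (g : 'I_N.-1 -> 'I_2 -> acc_idx M -> R)
  (cond1 : forall j : 'I_M.-1, c j != 0)
  (cond2 : exists beta : 'I_(N.-1 + N.-1) -> acc_idx M, \det (Gmx g beta) != 0) :
  let gens : mx R N M -> Prop := fun A =>
    A = 'i%C *: H_0 E hbar omega c d g \/
    exists j : 'I_M,
      A = 'i%C *: tens (idS R (N:=N)) (pstr R (single j PX)) \/
      A = 'i%C *: tens (idS R (N:=N)) (pstr R (single j PY)) in
  forall alpha : 'I_M -> pauli, (exists j, alpha j <> P0) ->
    lie_gen gens ('i%C *: tens (idS R (N:=N)) (pstr R alpha)).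
Proof.
move=> gens alpha [j0 alpha_j0].
have S_H0 : lie_gen gens ('i *: H_0 E hbar omega c d g) by apply: lie_base; left.
have S_X (j : 'I_M) : lie_gen gens (isigma (single j PX)).
  by apply: lie_base; right; exists j; left.
have S_Y (j : 'I_M) : lie_gen gens (isigma (single j PY)).
  by apply: lie_base; right; exists j; right.
have S_Z (j : 'I_M) := lie_gen_isigma_single_Z (S_X j) (S_Y j).
apply: (@L_nonidentity M (fun a => lie_gen gens (isigma a))).
- by move=> a b ab; rewrite /isigma (eq_sigma ab).
- by move=> a b; apply: lie_gen_isigma_pmul.
- by move=> j []; rewrite ?eqxx.
- move=> k k_lt; have k_lt' : (k < M.-1)%N by lia.
  exact: (lie_gen_isigma_xx_pair (k := Ordinal k_lt') hM (cond1 _) S_H0 S_Z).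
- by exists j0; apply/eqP.
Qed.
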